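(* Let $\mathcal{A}=(a_i)_{i=1}^\infty$ be a weakly increasing sequence of positive integers, and let $u,v$ be positive real numbers with $u>v$. If $k\geq 2$ and $\gcd(a_1,\ldots,a_k)=1$, then $$p_\mathcal{A}(un,k)^2>p_\mathcal{A}(un+vn,k)\,p_\mathcal{A}(un-vn,k)$$ holds for every $n>\frac{4u}{kv^2}\prod_{i=1}^k(1+iDk)$ such that $un$, $un+vn$ and $un-vn$ are integers, where $D=\operatorname{lcm}(a_1,\ldots,a_k)$.
   Context: For a weakly increasing sequence $\mathcal{A}=(a_i)_{i\ge1}$ of positive integers and a positive integer $k$, the restricted partition function $p_\mathcal{A}(n,k)$ is defined by $\sum_{n\ge0}p_\mathcal{A}(n,k)x^n=\prod_{i=1}^k(1-x^{a_i})^{-1}$; equivalently, it counts the partitions of $n$ whose parts lie in the multiset $\{a_1,\ldots,a_k\}$ (equal values with different indices count as distinct colors). Also $p_\mathcal{A}(n,k)=0$ for $n<0$. *)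

From mathcomp Require Import all_boot all_order all_algebra.
Set Implicit Arguments. Unset Strict Implicit. Unset Printing Implicit Defensive.

(* The sequence A = (a_i)_{i>=1} is a function a : nat -> nat; only the values
   a 1, a 2, ... are used (a 0 is ignored).
   pA a n k = p_A(n,k) = number of tuples (m_1,...,m_k) of nonnegative
   integers with m_1 a_1 + ... + m_k a_k = n (coefficient of x^n in
   prod_{i=1}^k (1 - x^{a_i})^{-1}). *)
Fixpoint pA (a : nat -> nat) (n k : nat) {struct k} : nat :=
  match k with
  | 0 => (n == 0)%N
  | k'.+1 => \sum_(j < n.+1 | (j * a k'.+1 <= n)%N) pA a (n - j * a k'.+1) k'
  end.

Definition gcdA (a : nat -> nat) (k : nat) : nat := \big[gcdn/0]_(1 <= i < k.+1) a i.
Definition lcmA (a : nat -> nat) (k : nat) : nat := \big[lcmn/1]_(1 <= i < k.+1) a i.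

(* Since (1 - x^D)/(1 - x^{a_i}) is a polynomial,
     prod_i (1 - x^{a_i})^{-1} = Q(x) * (1 - x^D)^{-k},   Q = prod_i (1 - x^D)/(1 - x^{a_i}),
   so p_A(N) = sum_R Q_R * g(N - R), where g counts partitions of the constant
   sequence D: g(qD) = C(q + k - 1, k - 1) and g vanishes off multiples of D.
   Only exponents R = N (mod D) contribute, and when gcd(a_1, ..., a_k) = 1 the
   residue sums c = sum_{R = rho (mod D)} Q_R do not depend on rho: each a_i
   shifts them invariantly because (1 - x^{a_i}) Q is divisible by (1 - x^D), and
   Bezout turns these shifts into unit shifts.  As deg Q < kD this gives
     p_A(N) <= c * C(N/D + k-1, k-1)   and   c * C(N/D, k-1) <= p_A(N) if N >= kD.
   Writing N0 = un and N0 +- M = un +- vn, the hypothesis on n gives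
   4 N0 k D < M^2, and an elementary estimate then yields
     C(Q1 + k-1, k-1) C(Q2 + k-1, k-1) < C(Q0, k-1)^2      (Q_j = N_j / D),
   which combined with the two bounds proves the theorem. *)

From mathcomp Require Import all_boot all_order all_algebra.
From mathcomp Require Import zify ring.
Import GRing.Theory.
Set Implicit Arguments. Unset Strict Implicit. Unset Printing Implicit Defensive.

Definition geom (c L : nat) : {poly nat} := (\sum_(j < L) 'X^(j * c))%R.

Lemma pA0 a k : pA a 0 k = 1.
Proof.
elim: k => [|k IH] //=.
by rewrite big_mkcond big_ord1 /= mul0n subn0 IH.
Qed.

Lemma coef_Mgeom (p : {poly nat}) c L M : 0 < c -> M < L ->
  ((p * geom c L)`_M)%R = \sum_(j < M.+1 | j * c <= M) (p`_(M - j * c))%R.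
Proof.
move=> c0 ML; rewrite /geom mulr_sumr coef_sum.
under eq_bigr => j _ do rewrite coefMXn ltnNge; rewrite big_mkcond /=.
rewrite (big_ord_widen_cond L (fun j => j * c <= M) (fun j => (p`_(M - j * c))%R) ML).
rewrite [RHS]big_mkcond /=; apply: eq_bigr => j _.
case: leqP => [jM|_]; rewrite ?andbT ?andbF; last by case: (j * c <= M).
by rewrite ifT // -ltnNge (leq_trans jM) // leq_pmulr.
Qed.

Lemma coef_prod_geom a (L : nat -> nat) k M :
  (forall i, 0 < i <= k -> 0 < a i /\ M < L i) ->
  ((\prod_(i < k) geom (a i.+1) (L i.+1))`_M)%R = pA a M k.
Proof.
elim: k M => [|k IH] M hk; first by rewrite big_ord0 coef1 natn.
have [a0 ML] := hk k.+1 (ltac:(lia)).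
rewrite big_ord_recr /= coef_Mgeom //; apply: eq_bigr => j _.
rewrite IH // => i /andP[i0 ik]; have [ai0 iL] := hk i (ltac:(lia)).
by split => //; apply: leq_ltn_trans iL; apply: leq_subr.
Qed.

(* A geometric series of length b m splits as a series of length b times one
   with step x b; this is (1 - y^{bm})/(1 - y) = (1 - y^b)/(1 - y) * (1 - y^{bm})/(1 - y^b)
   for y = x-th power of the variable. *)
Lemma geom_split x b m : geom x (b * m) = (geom x b * geom (x * b) m)%R.
Proof.
elim: m => [|m IH]; first by rewrite muln0 /geom !big_ord0 mulr0.
rewrite mulnSr /geom big_split_ord /= -/(geom x (b * m)) IH big_ord_recr /=.
rewrite mulrDr; congr (_ + _)%R; rewrite big_distrl /=; apply: eq_bigr => r _.
by rewrite -exprD; congr ('X^_)%R; lia.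
Qed.

Lemma geom_shift c b : (geom c b * 'X^c + 1 = geom c b + 'X^(b * c))%R.
Proof.
rewrite /geom.
have E1 := big_ord_recl b (fun r : 'I_b.+1 => ('X^(r * c) : {poly nat})%R).
have E2 := big_ord_recr b (fun r : 'I_b.+1 => ('X^(r * c) : {poly nat})%R).
rewrite /= in E1 E2; rewrite -E2 E1 mul0n expr0 addrC big_distrl /=.
by congr (_ + _)%R; apply: eq_bigr => r _; rewrite -exprD mulSn addnC.
Qed.

Lemma lcmA_dvd a k i : 0 < i <= k -> a i %| lcmA a k.
Proof.
elim: k => [|k IH] /andP[i0 ik]; first by lia.
rewrite /lcmA big_nat_recr //= -/(lcmA a k).
have [ik'|->] : i <= k \/ i = k.+1 by lia.
- by apply: dvdn_trans (dvdn_lcml _ _); apply: IH; rewrite i0.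
- exact: dvdn_lcmr.
Qed.

Lemma lcmA_gt0 a k : (forall i, 0 < i <= k -> 0 < a i) -> 0 < lcmA a k.
Proof.
elim: k => [|k IH] ap; first by rewrite /lcmA big_geq.
rewrite /lcmA big_nat_recr //= -/(lcmA a k) lcmn_gt0 ap ?andbT ?leqnn //.
by apply: IH => i /andP[i0 ik]; apply: ap; rewrite i0 (leq_trans ik).
Qed.

Definition res_sum (D : nat) (p : {poly nat}) (rho : nat) : nat :=
  \sum_(R < size p | R %% D == rho %% D) (p`_R)%R.

Lemma res_sumE D (p : {poly nat}) rho L : size p <= L ->
  res_sum D p rho = \sum_(R < L | R %% D == rho %% D) (p`_R)%R.
Proof.
move=> sL; rewrite /res_sum.
rewrite (big_ord_widen_cond L (fun R => R %% D == rho %% D) (fun R => (p`_R)%R) sL).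
rewrite [RHS](bigID (fun i : 'I_L => i < size p)) /= [X in _ = _ + X]big1 ?addn0 //.
by move=> i /andP[_ h]; rewrite nth_default // leqNgt.
Qed.

Lemma res_sum_mod D (p : {poly nat}) rho rho' :
  rho = rho' %[mod D] -> res_sum D p rho = res_sum D p rho'.
Proof. by move=> h; rewrite /res_sum h. Qed.

Lemma res_sumD D (p q : {poly nat}) rho :
  res_sum D (p + q)%R rho = res_sum D p rho + res_sum D q rho.
Proof.
have spq : size (p + q)%R <= size p + size q.
  by apply: leq_trans (size_polyD _ _) _; rewrite geq_max leq_addr leq_addl.
rewrite (res_sumE _ _ spq) (res_sumE _ _ (leq_addr (size q) (size p))).
rewrite (res_sumE _ _ (leq_addl (size p) (size q))).
by rewrite -big_split /=; apply: eq_bigr => i _; rewrite coefD.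
Qed.

Lemma res_sumXnM D (p : {poly nat}) m rho :
  res_sum D ('X^m * p)%R (rho + m) = res_sum D p rho.
Proof.
have s : size ('X^m * p)%R <= m + size p.
  by apply: leq_trans (size_polyMleq _ _) _; rewrite size_polyXn.
rewrite (res_sumE _ _ s) (res_sumE _ _ (leqnn _)) big_split_ord /= big1 ?add0n.
  apply: eq_big => [i|i _] /=; first by rewrite (addnC rho) eqn_modDl.
  by rewrite coefXnM ltnNge leq_addr /= addKn.
by move=> i _; rewrite coefXnM /= ltn_ord.
Qed.

Lemma res_sum_partial D (p : {poly nat}) rho L :
  \sum_(R < L | R %% D == rho %% D) (p`_R)%R <= res_sum D p rho.
Proof.
rewrite (@res_sumE _ _ _ (maxn L (size p))) ?leq_maxr //.
rewrite (big_ord_widen_cond (maxn L (size p)) (fun R => R %% D == rho %% D)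
           (fun R => (p`_R)%R) (leq_maxl L (size p))).
rewrite [leqRHS](bigID (fun i : 'I_(maxn L (size p)) => i < L)) /=; exact: leq_addr.
Qed.

Definition shift_invariant (f : nat -> nat) (t : nat) := forall r, f (r + t) = f r.

Lemma shift_invariantM f t x : shift_invariant f t -> shift_invariant f (x * t).
Proof.
move=> ht; elim: x => [|x IH] r; first by rewrite mul0n addn0.
by rewrite mulSn addnA IH ht.
Qed.

(* Invariance under t and c > 0 gives invariance under gcd(t, c): by Bezout
   gcd(t, c) + x t is a multiple of c. *)
Lemma shift_invariant_gcd f t c : 0 < c ->
  shift_invariant f t -> shift_invariant f c -> shift_invariant f (gcdn t c).
Proof.
move=> c0 ht hc r; have [x _ /dvdnP[q Eq]] := Bezoutr t c0.
rewrite -(shift_invariantM x ht) -addnA Eq.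
exact: shift_invariantM.
Qed.

Lemma sum_bin_diag q k : \sum_(j < q.+1) 'C(q - j + k, k) = 'C(q + k.+1, k.+1).
Proof.
elim: q => [|q IH]; first by rewrite big_ord1 subnn !add0n !binn.
rewrite big_ord_recl /= subn0.
under eq_bigr => j _ do rewrite /bump /= add1n subSS.
have -> : q.+1 + k.+1 = (q + k.+1).+1 by lia.
have -> : q.+1 + k = q + k.+1 by lia.
by rewrite IH binS addnC.
Qed.

Lemma pA_const_ndvd D k t : ~~ (D %| t) -> pA (fun _ => D) t k = 0.
Proof.
elim: k t => [|k IH] t nd /=; first by case: eqP nd => // ->; rewrite dvdn0.
apply: big1 => j jt; apply: IH; apply: contra nd => h.
by rewrite -(subnK jt) dvdn_add // dvdn_mull.
Qed.

(* ... and q D has as many as there are multisets of size q over k + 1 colours. *)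
Lemma pA_const_mul D k q : 0 < D -> pA (fun _ => D) (q * D) k.+1 = 'C(q + k, k).
Proof.
move=> D0.
have conv (F : nat -> nat) p :
    \sum_(j < (p * D).+1 | j * D <= p * D) F (p * D - j * D) = \sum_(j < p.+1) F ((p - j) * D).
  rewrite (@big_ord_widen _ _ _ p.+1 (p * D).+1 (fun j => F ((p - j) * D))); last first.
    by rewrite ltnS leq_pmulr.
  by apply: eq_big => [j|j _]; rewrite ?leq_pmul2r ?mulnBl.
elim: k q => [|k IH] q.
  rewrite /= (conv (fun t => nat_of_bool (t == 0))) big_ord_recr /= subnn mul0n eqxx.
  rewrite big1 ?bin0 // => j _.
  by rewrite muln_eq0 (gtn_eqF D0) orbF subn_eq0 leqNgt ltn_ord.
rewrite [LHS]/= (conv (fun t => pA (fun _ => D) t k.+1)).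
by under eq_bigr => j _ do rewrite IH; rewrite sum_bin_diag.
Qed.

Lemma pA_const D k t : 0 < D ->
  pA (fun _ => D) t k.+1 = if D %| t then 'C(t %/ D + k, k) else 0.
Proof.
move=> D0; case: ifP => [/divnK {1}<-|/negbT]; first exact: pA_const_mul.
exact: pA_const_ndvd.
Qed.

Section Decomposition.

Variables (a : nat -> nat) (k D : nat).
Hypothesis a_pos : forall i, 0 < i <= k -> 0 < a i.
Hypothesis a_dvd : forall i, 0 < i <= k -> a i %| D.
Hypothesis D_pos : 0 < D.

Lemma quot_mul i : 0 < i <= k -> a i * (D %/ a i) = D.
Proof. by move=> ik; rewrite mulnC divnK // a_dvd. Qed.

Lemma quot_gt0 i : 0 < i <= k -> 0 < D %/ a i.
Proof. by move=> ik; have := quot_mul ik; case: (D %/ a i) => //; lia. Qed.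

(* The polynomial Q = prod_{i <= k} (1 - x^D)/(1 - x^{a_i}). *)
Definition quot_poly : {poly nat} := (\prod_(i < k) geom (a i.+1) (D %/ a i.+1))%R.

(* prod_i (1 - x^{a_i})^{-1} = Q * (1 - x^D)^{-k}: p_A is the convolution of the
   coefficients of Q with the partition function of the constant sequence D. *)
Lemma pA_decomp N :
  pA a N k = \sum_(R < N.+1) ((quot_poly)`_R)%R * pA (fun _ => D) (N - R) k.
Proof.
have Lgt i : 0 < i <= k -> N < D %/ a i * N.+1.
  by move=> ik; have := quot_gt0 ik; case: (D %/ a i) => // b _; lia.
rewrite -(@coef_prod_geom a (fun i => D %/ a i * N.+1)); last first.
  by move=> i ik; rewrite a_pos // Lgt.
have -> : (\prod_(i < k) geom (a i.+1) (D %/ a i.+1 * N.+1) =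
           quot_poly * \prod_(i < k) geom D N.+1)%R.
  rewrite -big_split /=; apply: eq_bigr => i _.
  by rewrite geom_split quot_mul //= ltn_ord.
rewrite (coefM quot_poly); apply: eq_bigr => R _.
rewrite (@coef_prod_geom (fun _ => D) (fun _ => N.+1)) // => i _.
by rewrite D_pos ltnS leq_subr.
Qed.

(* The residue sums of Q are invariant under shifts by each a_i: writing
   Q = G_i Q' with G_i = geom (a i) (D / a i), [geom_shift] gives
   Q x^{a_i} + Q' = Q + x^D Q', and x^D does not change residue sums. *)
Lemma res_sum_quot_shift (i : 'I_k) :
  shift_invariant (res_sum D quot_poly) (a i.+1).
Proof.
move=> rho; have ik : 0 < i.+1 <= k by rewrite /= ltn_ord.
set P := quot_poly; set P' := (\prod_(j < k | j != i) geom (a j.+1) (D %/ a j.+1))%R.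
have PE : P = (geom (a i.+1) (D %/ a i.+1) * P')%R by rewrite /P /quot_poly (bigD1 i).
have key : (P * 'X^(a i.+1) + P' = P + 'X^D * P')%R.
  rewrite PE mulrAC -{2}(mul1r P') -mulrDl geom_shift mulrDl.
  by rewrite mulnC quot_mul // (mulrC ('X^D)%R).
have hD r : res_sum D ('X^D * P')%R r = res_sum D P' r.
  by rewrite (@res_sum_mod _ _ r (r + D)) ?res_sumXnM // modnDr.
apply/eqP; rewrite -(eqn_add2r (res_sum D P' (rho + a i.+1))).
by rewrite -{1}hD -res_sumD -key res_sumD (mulrC P) res_sumXnM.
Qed.

Lemma size_geom c b : 0 < c -> size (geom c b) <= b * c.
Proof.
move=> c0; apply: leq_trans (size_sum _ _ _) _; apply/bigmax_leqP => r _.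
rewrite size_polyXn (leq_trans _ (leq_mul (ltn_ord r) (leqnn c))) //.
by rewrite mulSn addnC -addn1 leq_add2l.
Qed.

Lemma size_quot_poly : 0 < k -> size quot_poly <= k * D.
Proof.
move=> k0; apply: leq_trans (size_poly_prod_leq _ _) _; rewrite card_ord.
have sD (i : 'I_k) : size (geom (a i.+1) (D %/ a i.+1)) <= D.
  have ik : 0 < i.+1 <= k by rewrite /= ltn_ord.
  by rewrite -[leqRHS](quot_mul ik) mulnC size_geom ?a_pos.
have : \sum_(i < k) size (geom (a i.+1) (D %/ a i.+1)) <= k * D.
  by rewrite -[k in k * D]card_ord -sum_nat_const; apply: leq_sum => i _; apply: sD.
by move: (\sum_(i < k) _) => s; lia.
Qed.

Lemma coef0_quot_poly : ((quot_poly)`_0)%R = 1.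
Proof.
rewrite (@coef_prod_geom a (fun i => D %/ a i)) ?pA0 // => i ik.
by rewrite a_pos // quot_gt0.
Qed.

Lemma res_sum_quot_gt0 : 0 < res_sum D quot_poly 0.
Proof.
rewrite (@res_sumE _ _ _ (size quot_poly).+1) // (bigD1 ord0) //=.
by rewrite coef0_quot_poly.
Qed.

(* When gcd(a_1, ..., a_k) = 1 all residue sums of Q coincide: shifting by
   gcd(a_1, ..., a_j) is invariant for every j, by induction on j. *)
Lemma res_sum_quot_const : gcdA a k = 1 ->
  forall rho, res_sum D quot_poly rho = res_sum D quot_poly 0.
Proof.
move=> hg; set F := res_sum D quot_poly.
have inv j : j <= k -> shift_invariant F (gcdA a j).
  elim: j => [|j IH] jk; first by move=> r; rewrite /gcdA big_geq ?addn0.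
  rewrite /gcdA big_nat_recr //= -/(gcdA a j).
  apply: shift_invariant_gcd; [exact: a_pos | exact: IH (ltnW jk) |].
  exact: (res_sum_quot_shift (Ordinal jk)).
have step r : F r.+1 = F r by rewrite -addn1 -hg inv.
by elim=> [|r IH] //; rewrite step.
Qed.

Let c := res_sum D quot_poly 0.

(* Upper bound p_A(N) <= c C(N/D + k-1, k-1): in the convolution only R = N
   (mod D) contribute, each with weight at most C(N/D + k-1, k-1). *)
Lemma pA_upper N : 0 < k -> gcdA a k = 1 -> pA a N k <= c * 'C(N %/ D + k.-1, k.-1).
Proof.
move=> k0 hg; rewrite pA_decomp; set C := 'C(_, _).
have term (R : 'I_N.+1) :
    pA (fun _ => D) (N - R) k <= (R %% D == N %% D) * C.
  have RN : R <= N by rewrite -ltnS.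
  rewrite -(prednK k0) pA_const // eq_sym eqn_mod_dvd //.
  case: ifP => // dv; rewrite mul1n leq_bin2l // leq_add2r leq_div2r //.
  exact: leq_subr.
apply: (@leq_trans (\sum_(R < N.+1) (quot_poly`_R)%R * (R %% D == N %% D) * C)).
  by apply: leq_sum => R _; rewrite -mulnA leq_mul2l term orbT.
rewrite -big_distrl leq_mul2r /c -(res_sum_quot_const hg N); apply/orP; right.
rewrite (eq_bigr (fun R : 'I_N.+1 => if R %% D == N %% D then (quot_poly`_R)%R else 0)).
  by rewrite -big_mkcond res_sum_partial.
by move=> R _; case: ifP; rewrite ?muln1 ?muln0.
Qed.

(* Lower bound c C(N/D, k-1) <= p_A(N) for N >= k D: all R = N (mod D) with
   Q_R > 0 satisfy R < N and R/D <= k-1, so have weight at least C(N/D, k-1). *)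
Lemma pA_lower N : 0 < k -> gcdA a k = 1 -> k * D <= N ->
  c * 'C(N %/ D, k.-1) <= pA a N k.
Proof.
move=> k0 hg kDN; rewrite pA_decomp; set P := quot_poly.
have sPN : size P <= N.+1 by rewrite (leq_trans (size_quot_poly k0)) // ltnW.
rewrite /c -(res_sum_quot_const hg N) (res_sumE _ _ sPN) big_distrl /=.
rewrite [leqRHS](bigID (fun R : 'I_N.+1 => R %% D == N %% D)) /=.
apply: leq_trans (leq_addr _ _).
apply: leq_sum => R hR; rewrite leq_mul2l; apply/orP; case: eqP => [|PR]; [by left | right].
have RsP : R < size P by rewrite ltnNge; apply/negP => h; apply: PR; rewrite nth_default.
have RkD : R < k * D by apply: leq_trans (size_quot_poly k0).
have RN : R <= N by rewrite -ltnS.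
have dv : D %| N - R by rewrite -eqn_mod_dvd // eq_sym.
rewrite -(prednK k0) pA_const // dv /= leq_bin2l //.
have : R %/ D < k by rewrite ltn_divLR.
have -> : N %/ D = (N - R) %/ D + R %/ D by rewrite -divnMDl // divnK // subnK.
lia.
Qed.

End Decomposition.

(* With p = k D <= N0, q = j D <= p and 4 N0 p < M^2:
   (N0 + q)^2 - M^2 < (N0 + q)^2 - 4 N0 p <= (N0 - p + q)^2. *)
Lemma key_quad N0 M p q : q <= p -> p <= N0 -> M <= N0 -> 4 * N0 * p < M ^ 2 ->
  (N0 + M + q) * (N0 - M + q) < (N0 - p + q) ^ 2.
Proof.
move=> qp pN MN h.
have [r Er] : exists r, N0 = M + r by exists (N0 - M); lia.
have [s Es] : exists s, N0 = p + s by exists (N0 - p); lia.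
have -> : N0 - M = r by lia.
have -> : N0 - p = s by lia.
nia.
Qed.

(* The termwise inequality behind the binomial estimate: for 1 <= j <= K,
   with Q_i the quotients by D of N0 + M, N0 - M and N0,
   (Q_1 + j)(Q_2 + j) < (Q_0 + 1 - K + j)^2, after multiplying by D^2. *)
Lemma quot_ineq D K M N0 j : 0 < D -> M <= N0 -> 4 * N0 * (K * D) < M ^ 2 ->
  1 <= j <= K ->
  ((N0 + M) %/ D + j) * ((N0 - M) %/ D + j) < (N0 %/ D + 1 - K + j) ^ 2.
Proof.
move=> D0 MN hM /andP[j1 jK].
have KDN : K * D < N0 by nia.
have KQ : K <= N0 %/ D + 1.
  by rewrite -(leq_pmul2r D0) (leq_trans (ltnW KDN)) // ltnW // addn1 ltn_ceil.
have Q1D : ((N0 + M) %/ D + j) * D <= N0 + M + j * D.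
  by rewrite mulnDl leq_add2r leq_divM.
have Q2D : ((N0 - M) %/ D + j) * D <= N0 - M + j * D.
  by rewrite mulnDl leq_add2r leq_divM.
have Q0D : N0 - K * D + j * D < (N0 %/ D + 1 - K + j) * D.
  by have := ltn_ceil N0 D0; rewrite !mulnDl mulnBl; nia.
have quad := key_quad (leq_mul jK (leqnn D)) (ltnW KDN) MN hM.
have Q0D2 : (N0 - K * D + j * D) ^ 2 < ((N0 %/ D + 1 - K + j) * D) ^ 2.
  by rewrite ltn_sqr.
have DD : 0 < D * D by rewrite muln_gt0 D0.
rewrite -(ltn_pmul2r DD) -mulnn mulnACA.
have := leq_ltn_trans (leq_mul Q1D Q2D) (ltn_trans quad Q0D2).
by rewrite expnMn -!mulnn.
Qed.

(* One step of the induction behind [bin_prod_lt], using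
   (m + 1) C(n + m + 1, m + 1) = (n + m + 1) C(n + m, m). *)
Lemma bin_step X Y Z m :
  'C(Y + m, m) * 'C(Z + m, m) <= 'C(X + m, m) ^ 2 ->
  (Y + m.+1) * (Z + m.+1) < (X + m.+1) ^ 2 ->
  'C(Y + m.+1, m.+1) * 'C(Z + m.+1, m.+1) < 'C(X + m.+1, m.+1) ^ 2.
Proof.
have E n : m.+1 * 'C(n + m.+1, m.+1) = (n + m.+1) * 'C(n + m, m).
  by rewrite -mul_bin_diag addnS.
move=> le lt; have C0 : 0 < 'C(X + m, m) by rewrite bin_gt0 leq_addl.
have mm : 0 < m.+1 * m.+1 by [].
rewrite -(ltn_pmul2l mm) mulnACA !E -mulnn [X in _ < X]mulnACA !E.
rewrite mulnACA [X in _ < X]mulnACA !mulnn.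
apply: (leq_ltn_trans (leq_mul (leqnn _) le)).
by rewrite ltn_pmul2r ?expn_gt0 ?C0.
Qed.

Lemma bin_prod_lt X Y Z m :
  (forall j, 0 < j <= m -> (Y + j) * (Z + j) < (X + j) ^ 2) -> 0 < m ->
  'C(Y + m, m) * 'C(Z + m, m) < 'C(X + m, m) ^ 2.
Proof.
elim: m => [|m IH] hj // _; apply: bin_step; last by apply: hj; lia.
case: m IH hj => [|m] IH hj; first by rewrite !bin0.
by apply/ltnW/IH => // j jm; apply: hj; lia.
Qed.

Lemma pA_log_concave a k N0 M :
  (forall i, 0 < i <= k -> 0 < a i) -> 1 < k -> gcdA a k = 1 ->
  M <= N0 -> 4 * N0 * (k * lcmA a k) < M ^ 2 ->
  pA a (N0 + M) k * pA a (N0 - M) k < pA a N0 k ^ 2.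
Proof.
move=> ap k1 hg MN gap; set D := lcmA a k.
have D0 : 0 < D := lcmA_gt0 ap.
have dv i : 0 < i <= k -> a i %| D by apply: lcmA_dvd.
have k0 : 0 < k by lia.
have kDN : k * D <= N0 by nia.
set c := res_sum D (quot_poly a k D) 0.
have c0 : 0 < c := res_sum_quot_gt0 ap dv D0.
have up1 := pA_upper ap dv D0 (N0 + M) k0 hg.
have up2 := pA_upper ap dv D0 (N0 - M) k0 hg.
have lo := pA_lower ap dv D0 k0 hg kDN.
have hC : 'C((N0 + M) %/ D + k.-1, k.-1) * 'C((N0 - M) %/ D + k.-1, k.-1) <
          'C(N0 %/ D, k.-1) ^ 2.
  have kQ : k <= N0 %/ D by rewrite leq_divRL.
  have -> : N0 %/ D = N0 %/ D + 1 - k + k.-1 by lia.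
  apply: bin_prod_lt => [j hj|]; last by lia.
  by apply: quot_ineq => //; lia.
apply: (leq_ltn_trans (leq_mul up1 up2)); rewrite mulnACA.
apply: (@leq_trans ((c * 'C(N0 %/ D, k.-1)) ^ 2)); last by rewrite leq_exp2r.
by rewrite expnMn mulnn ltn_pmul2l // muln_gt0 c0.
Qed.

Import Order.TTheory Num.Theory.
Local Open Scope ring_scope.

Lemma prod_ge (R : realFieldType) (k D : nat) :
  (k * D * k)%:R <= \prod_(1 <= i < k.+1) (1 + (i * D * k)%N%:R) :> R.
Proof.
case: k => [|k]; first by rewrite big_geq ?mul0n ?ler01.
rewrite big_nat_recr //=; apply: (le_trans _ (ler_peMl _ _)); rewrite ?lerDr ?addr_ge0 //.
by apply: (big_ind (fun x : R => 1 <= x)) => // [x y|i _]; [exact: mulr_ege1 | rewrite lerDl].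
Qed.

Lemma real_gap (R : realFieldType) (u v n K D P : R) :
  0 < v -> v < u -> 0 < K -> 0 <= D -> K * D * K <= P ->
  4 * u / (K * v ^+ 2) * P < n -> 0 < n /\ 4 * (u * n) * (K * D) < (v * n) ^+ 2.
Proof.
move=> v0 vu K0 D0 hP hn; have u0 : 0 < u by apply: lt_trans vu.
have Kv : 0 < K * v ^+ 2 by rewrite mulr_gt0 ?exprn_gt0.
have c0 : 0 <= 4 * u / (K * v ^+ 2) by rewrite divr_ge0 ?ltW ?mulr_gt0.
have h : 4 * u * K * D / v ^+ 2 < n.
  have -> : 4 * u * K * D / v ^+ 2 = 4 * u / (K * v ^+ 2) * (K * D * K).
    by field; rewrite (gt_eqF K0) (gt_eqF v0).
  exact: le_lt_trans (ler_wpM2l c0 hP) hn.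
have n0 : 0 < n.
  apply: le_lt_trans h; apply: divr_ge0; last by rewrite exprn_ge0 // ltW.
  by rewrite !mulr_ge0 // ltW.
split => //; rewrite ltr_pdivrMr ?exprn_gt0 // in h.
have -> : 4 * (u * n) * (K * D) = (4 * u * K * D) * n by ring.
have -> : (v * n) ^+ 2 = (n * v ^+ 2) * n by ring.
by rewrite ltr_pM2r.
Qed.

Lemma nat_shift (R : realFieldType) (x y : R) (N0 N1 N2 : nat) :
  0 <= y -> x = N0%:R -> x + y = N1%:R -> x - y = N2%:R ->
  [/\ N1 = (N0 + (N1 - N0))%N, N2 = (N0 - (N1 - N0))%N,
      (N1 - N0 <= N0)%N & (N1 - N0)%:R = y].
Proof.
move=> y0 h0 h1 h2.
have le01 : (N0 <= N1)%N by rewrite -(ler_nat R) -h1 -h0 lerDl.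
have sum : (N1 + N2 = N0 + N0)%N.
  by apply/eqP; rewrite -(eqr_nat R) !natrD -h0 -h1 -h2; apply/eqP; ring.
split; try lia.
by rewrite natrB // -h1 -h0; ring.
Qed.

(* The hypothesis on n yields 4 N0 k D < M^2 for the integer M = vn, so the
   theorem is an instance of [pA_log_concave]. *)
Theorem corollary3p3 (R : realFieldType) (a : nat -> nat)
  (a_pos : forall i, (1 <= i)%N -> (0 < a i)%N)
  (a_incr : forall i j, (1 <= i)%N -> (i <= j)%N -> (a i <= a j)%N)
  (u v : R) (hv : 0 < v) (huv : v < u)
  (k : nat) (hk : (2 <= k)%N) (hgcd : gcdA a k = 1%N)
  (n : R)
  (hn : (4 * u / (k%:R * v ^+ 2)) *
          \prod_(1 <= i < k.+1) (1 + (i * lcmA a k * k)%N%:R) < n)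
  (N0 N1 N2 : nat)
  (h0 : u * n = N0%:R) (h1 : u * n + v * n = N1%:R) (h2 : u * n - v * n = N2%:R) :
  (pA a N1 k * pA a N2 k < (pA a N0 k) ^ 2)%N.
Proof.
have hP := prod_ge R k (lcmA a k); rewrite !natrM in hP.
have k0 : 0 < k%:R :> R by rewrite ltr0n; lia.
have [n0 gap] := real_gap hv huv k0 (ler0n R _) hP hn.
have [E1 E2 MN EM] := nat_shift (ltW (mulr_gt0 hv n0)) h0 h1 h2.
rewrite E1 E2; apply: pA_log_concave => //; first by move=> i /andP[i0 _]; exact: a_pos.
by rewrite -(ltr_nat R) natrX !natrM EM -h0.
Qed.
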